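(* Let $g:\mathbb{R}^n\times\Xi\to\mathbb{R}^n$ be an arbitrary (stochastic gradient) map and let $\xi^{(1)},\xi^{(2)},\dots\in\Xi$ be a fixed sequence of samples. Fix $\mu\in[0,1)$ and constant learning rates $\gamma_{\mathrm{primal}},\gamma_{\mathrm{modern}}>0$ with $(1-\mu)\gamma_{\mathrm{primal}}=\gamma_{\mathrm{modern}}$. Define the primal averaging sequences by $z_{\mathrm{primal}}^{(1)}=x_{\mathrm{primal}}^{(1)}$ and, for $t\ge 1$, $$y_{\mathrm{primal}}^{(t)}=\mu x_{\mathrm{primal}}^{(t)}+(1-\mu)z_{\mathrm{primal}}^{(t)},\quad z_{\mathrm{primal}}^{(t+1)}=z_{\mathrm{primal}}^{(t)}-\gamma_{\mathrm{primal}}\, g(y_{\mathrm{primal}}^{(t)};\xi^{(t)}),\quad x_{\mathrm{primal}}^{(t+1)}=\mu x_{\mathrm{primal}}^{(t)}+(1-\mu)z_{\mathrm{primal}}^{(t+1)},$$ and the modern Nesterov sequences by $x_{\mathrm{modern}}^{(1)}=x_{\mathrm{primal}}^{(1)}$, $b_{\mathrm{modern}}^{(0)}=0$ and, for $t\ge1$, $$b_{\mathrm{modern}}^{(t)}=\mu b_{\mathrm{modern}}^{(t-1)}+g(x_{\mathrm{modern}}^{(t)};\xi^{(t)}),\qquad x_{\mathrm{modern}}^{(t+1)}=x_{\mathrm{modern}}^{(t)}-\gamma_{\mathrm{modern}}\big[\mu b_{\mathrm{modern}}^{(t)}+g(x_{\mathrm{modern}}^{(t)};\xi^{(t)})\big].$$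 Then for every $t\ge 1$, $$y_{\mathrm{primal}}^{(t)}=x_{\mathrm{modern}}^{(t)}\qquad\text{and}\qquad b_{\mathrm{modern}}^{(t)}=\frac{1}{(1-\mu)\gamma_{\mathrm{primal}}}\big(x_{\mathrm{primal}}^{(t)}-x_{\mathrm{primal}}^{(t+1)}\big).$$
   Context: The first recursion is the ''primal averaging formulation'' of Nesterov's method and the second is the ''modern formulation'' (as implemented in PyTorch/JAX). Both are driven by the same sample sequence $\xi^{(t)}$ and started from the same initial point. *)

From HB Require Import structures.
From mathcomp Require Import all_boot all_order all_algebra.
From mathcomp Require Import reals.
Set Implicit Arguments. Unset Strict Implicit. Unset Printing Implicit Defensive.
Import Order.TTheory GRing.Theory Num.Theory.
Local Open Scope ring_scope.

Section Nesterov.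
Variables (R : realType) (n : nat) (Xi : Type).
Variables (g : 'rV[R]_n -> Xi -> 'rV[R]_n) (xi : nat -> Xi).
Variables (mu gamma : R) (x1 : 'rV[R]_n).

(* primal_xz k = (x_primal^(k+1), z_primal^(k+1)) *)
Fixpoint primal_xz (k : nat) : 'rV[R]_n * 'rV[R]_n :=
  match k with
  | 0 => (x1, x1)
  | k'.+1 =>
    let: (x, z) := primal_xz k' in
    let y := mu *: x + (1 - mu) *: z in
    let z' := z - gamma *: g y (xi k'.+1) in
    (mu *: x + (1 - mu) *: z', z')
  end.

(* for t >= 1 *)
Definition x_primal (t : nat) := (primal_xz t.-1).1.
Definition z_primal (t : nat) := (primal_xz t.-1).2.
Definition y_primal (t : nat) := mu *: x_primal t + (1 - mu) *: z_primal t.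

(* modern_xb k = (x_modern^(k+1), b_modern^(k)) *)
Fixpoint modern_xb (k : nat) : 'rV[R]_n * 'rV[R]_n :=
  match k with
  | 0 => (x1, 0)
  | k'.+1 =>
    let: (x, b) := modern_xb k' in
    let gx := g x (xi k'.+1) in
    let b' := mu *: b + gx in
    (x - gamma *: (mu *: b' + gx), b')
  end.

Definition x_modern (t : nat) := (modern_xb t.-1).1.  (* t >= 1 *)
Definition b_modern (t : nat) := (modern_xb t).2.     (* t >= 0 *)
End Nesterov.

(* Both methods are driven by the same gradient evaluations: by induction, the primal
   extrapolation point y^(t) is the modern iterate x^(t), and the primal gap x^(t) - z^(t)
   is the rescaled momentum gamma * mu * b^(t-1). One step of the primal recursion then
   shows that x^(t) - x^(t+1) = (1 - mu) * gamma * b^(t). *)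
From HB Require Import structures.
From mathcomp Require Import all_boot all_order all_algebra.
From mathcomp Require Import reals.
From mathcomp Require Import ring.
Set Implicit Arguments. Unset Strict Implicit.
Import Order.TTheory GRing.Theory Num.Theory.
Local Open Scope ring_scope.

Section PrimalModernCoupling.
Variables (R : realType) (n : nat) (Xi : Type).
Variables (g : 'rV[R]_n -> Xi -> 'rV[R]_n) (xi : nat -> Xi).
Variables (mu gamma : R) (x1 : 'rV[R]_n).

Local Notation x_p := (x_primal g xi mu gamma x1).
Local Notation z_p := (z_primal g xi mu gamma x1).
Local Notation y_p := (y_primal g xi mu gamma x1).
Local Notation x_m := (x_modern g xi mu ((1 - mu) * gamma) x1).
Local Notation b_m := (b_modern g xi mu ((1 - mu) * gamma) x1).

Lemma primal_modern_coupling k :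
  y_p k.+1 = x_m k.+1 /\ x_p k.+1 - z_p k.+1 = (gamma * mu) *: b_m k.
Proof.
rewrite /y_primal /x_primal /z_primal /x_modern /b_modern /=.
elim: k => [|k IH] /=.
  by split; apply/rowP => j; rewrite !mxE; ring.
move: IH; case: (primal_xz _ _ _ _ _ k) => x z.
case: (modern_xb _ _ _ _ _ k) => xm b /= [<- gap].
have -> : x = z + (gamma * mu) *: b by rewrite -gap addrC subrK.
by split; apply/rowP => j; rewrite !mxE; ring.
Qed.

Lemma x_primal_decrement k :
  x_p k.+1 - x_p k.+2 = ((1 - mu) * gamma) *: b_m k.+1.
Proof.
have [] := primal_modern_coupling k.
rewrite /y_primal /x_primal /z_primal /x_modern /b_modern /=.
case: (primal_xz _ _ _ _ _ k) => x z.
case: (modern_xb _ _ _ _ _ k) => xm b /= <- gap.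
have -> : x = z + (gamma * mu) *: b by rewrite -gap addrC subrK.
by apply/rowP => j; rewrite !mxE; ring.
Qed.

End PrimalModernCoupling.

Theorem proposition1 (R : realType) (n : nat) (Xi : Type)
  (g : 'rV[R]_n -> Xi -> 'rV[R]_n) (xi : nat -> Xi)
  (mu gamma_primal gamma_modern : R) (x1 : 'rV[R]_n) :
  0 <= mu -> mu < 1 -> 0 < gamma_primal -> 0 < gamma_modern ->
  (1 - mu) * gamma_primal = gamma_modern ->
  forall t : nat, (1 <= t)%N ->
    y_primal g xi mu gamma_primal x1 t = x_modern g xi mu gamma_modern x1 t /\
    b_modern g xi mu gamma_modern x1 t =
      ((1 - mu) * gamma_primal)^-1 *:
        (x_primal g xi mu gamma_primal x1 t - x_primal g xi mu gamma_primal x1 t.+1).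
Proof.
move=> _ mu_lt1 gamma_gt0 _ <- [//|k] _.
have step_neq0 : (1 - mu) * gamma_primal != 0.
  by rewrite mulf_neq0 ?gt_eqF // subr_gt0.
split; first by have [] := primal_modern_coupling g xi mu gamma_primal x1 k.
by rewrite x_primal_decrement scalerA mulVf ?scale1r.
Qed.
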